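(* Let $L$ be a linear forest with $k$ vertices. If $q\ge k+1$ and $r\ge k-1$ are integers, then $s(P_{q+r},L)=s(C_q+P_r,L)$.
   Context: A linear forest is a disjoint union of paths. $P_j$ and $C_j$ are the path and cycle with $j$ vertices, $P_0$ is the graph with no vertices, and $+$ denotes disjoint union. For graphs $G,H$, $s(G,H)$ is the number of vertex subsets $X\subseteq V(G)$ such that $G[X]$ is isomorphic to $H$. *)

From mathcomp Require Import all_boot.
Set Implicit Arguments. Unset Strict Implicit. Unset Printing Implicit Defensive.

Definition path_rel (n : nat) : rel 'I_n :=
  fun i j => ((val i).+1 == val j) || ((val j).+1 == val i).

Definition cycle_rel (q : nat) : rel 'I_q :=
  fun i j => (i != j) && (((val i).+1 %% q == val j) || ((val j).+1 %% q == val i)).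

Definition sum_rel (A B : finType) (ea : rel A) (eb : rel B) : rel (A + B)%type :=
  fun x y => match x, y with
             | inl a, inl a' => ea a a'
             | inr b, inr b' => eb b b'
             | _, _ => false
             end.

(* Disjoint union of paths P_{s_0} + P_{s_1} + ... *)
Definition lf_vertex (s : seq nat) : finType :=
  {i : 'I_(size s) & 'I_(nth 0 s i)}.

Arguments lf_vertex : clear implicits.
Definition lf_rel (s : seq nat) : rel (lf_vertex s) :=
  fun x y => (tag x == tag y) &&
             (((val (tagged x)).+1 == val (tagged y)) ||
              ((val (tagged y)).+1 == val (tagged x))).

Definition graph_iso (T T' : finType) (e : rel T) (e' : rel T') : Prop :=
  exists f : T -> T', bijective f /\ forall x y, e x y = e' (f x) (f y).

Definition linear_forest (T : finType) (e : rel T) : Prop :=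
  exists s : seq nat, graph_iso e (@lf_rel s).

Definition induced_copy (V T : finType) (eG : rel V) (eH : rel T) (X : {set V}) : bool :=
  [exists f : {ffun T -> V},
     [&& injectiveb f, f @: [set: T] == X &
         [forall x, forall y, eH x y == eG (f x) (f y)]]].

Definition s_count (V T : finType) (eG : rel V) (eH : rel T) : nat :=
  #|[set X : {set V} | induced_copy eG eH X]|.
Arguments path_rel : clear implicits.
Arguments cycle_rel : clear implicits.

(* Call a property Q of vertex sets invariant if Q(G, X) only depends on the isomorphism type
   of G[X].  "G[X] is isomorphic to L" is invariant and holds only for k-sets, and we show that
   P_(q+r) and C_q + P_r have equally many sets satisfying any such Q.  The two graphs differ
   only at the vertex q-1, whose neighbours are q-2, q in P_(q+r) and q-2, 0 in C_q + P_r.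
   A set X missing q-1 induces the same graph in both.  Otherwise the component of G[X]
   through q-1 is a run of m + j consecutive vertices (m of them ending at q-1, j after it),
   and X is this run plus a set Y in the graph left after deleting the run and its two
   neighbours, with Q(Y + P_(m+j)).  In both graphs what is left is a linear forest P_a + P_b
   with the same a + b and with a, b >= k - m - j - 1.  Finally, the count in P_a + P_b does
   not depend on the split a + b as long as a, b >= k - 1: moving the cut by one is handled by
   the same run decomposition, now at the cut, and induction on k. *)

From mathcomp Require Import all_boot zify.
Set Implicit Arguments. Unset Strict Implicit. Unset Printing Implicit Defensive.

(** * Invariant properties of vertex sets *)

Definition set_prop := forall V : finType, rel V -> {set V} -> bool.

Definition iso_invariant (Q : set_prop) : Prop :=
  forall (A V : finType) (eA : rel A) (eV : rel V) (f : A -> V) (S : {set A}),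
  {in S &, injective f} -> {in S &, forall x y, eA x y = eV (f x) (f y)} ->
  Q A eA S = Q V eV (f @: S).

Definition sized (Q : set_prop) (k : nat) : Prop :=
  forall (V : finType) (e : rel V) (S : {set V}), Q V e S -> #|S| = k.

Definition nsets (V : finType) (e : rel V) (Q : set_prop) : nat := #|[set X | Q V e X]|.

Definition copy_of (T : finType) (eL : rel T) : set_prop :=
  fun V e X => induced_copy e eL X.

Lemma copy_of_invariant (T : finType) (eL : rel T) : iso_invariant (copy_of eL).
Proof.
move=> A V eA eV phi S phiI phiE; apply/existsP/existsP.
- case=> f /and3P[/injectiveP fI /eqP fS /forallP fE].
  have fin t : f t \in S by rewrite -fS imset_f.
  exists [ffun t => phi (f t)]; apply/and3P; split.
  + by apply/injectiveP=> t t'; rewrite !ffunE => /phiI-/(_ (fin t) (fin t')) /fI.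
  + by apply/eqP; rewrite -fS -imset_comp; apply: eq_imset => t; rewrite ffunE.
  + apply/forallP=> x; apply/forallP=> y; rewrite !ffunE -phiE //.
    exact: (forallP (fE x) y).
- case=> f /and3P[/injectiveP fI /eqP fS /forallP fE].
  have /fin_all_exists[g gP] t : exists a, (a \in S) && (f t == phi a).
    have : f t \in phi @: S by rewrite -fS imset_f.
    by case/imsetP=> a aS ->; exists a; rewrite aS eqxx.
  have gS t : g t \in S by case/andP: (gP t).
  have gE t : f t = phi (g t) by case/andP: (gP t) => _ /eqP.
  exists [ffun t => g t]; apply/and3P; split.
  + by apply/injectiveP=> t t'; rewrite !ffunE => h; apply: fI; rewrite !gE h.
  + rewrite eqEsubset; apply/andP; split; apply/subsetP=> a.
      by case/imsetP=> t _ ->; rewrite ffunE.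
    move=> aS; have : phi a \in f @: setT by rewrite fS imset_f.
    case/imsetP=> t _; rewrite gE => /phiI-/(_ aS (gS t)) ->.
    by apply/imsetP; exists t => //; rewrite ffunE.
  + apply/forallP=> x; apply/forallP=> y; rewrite !ffunE phiE ?gS //.
    by rewrite -!gE; exact: (forallP (fE x) y).
Qed.

Lemma copy_of_sized (T : finType) (eL : rel T) : sized (copy_of eL) #|T|.
Proof.
move=> V e S /existsP[f /and3P[/injectiveP fI /eqP <- _]].
by rewrite card_imset // cardsT.
Qed.

Definition with_path (Q : set_prop) (l : nat) : set_prop := fun V e X =>
  Q _ (sum_rel e (path_rel l)) (inl @: X :|: inr @: [set: 'I_l]).

Lemma with_path_invariant Q l : iso_invariant Q -> iso_invariant (with_path Q l).
Proof.
move=> QI A V eA eV phi S phiI phiE.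
pose psi (z : A + 'I_l) : V + 'I_l := match z with inl a => inl (phi a) | inr s => inr s end.
rewrite /with_path (QI _ _ _ (sum_rel eV (path_rel l)) psi).
- by congr Q; rewrite imsetU -!imset_comp; congr (_ :|: _); apply: eq_imset.
- move=> [a|s] [b|t] /setUP[]/imsetP[a' a'S //[->]] /setUP[]/imsetP[b' b'S //[->]] //=.
  + by case=> /phiI ->.
  + by case=> ->.
- move=> [a|s] [b|t] /setUP[]/imsetP[a' a'S //[->]] /setUP[]/imsetP[b' b'S //[->]] //=.
  exact: phiE.
Qed.

Lemma with_path_sized Q k l : sized Q k -> sized (with_path Q l) (k - l).
Proof.
move=> QS V e S /QS; rewrite cardsU.
have -> : inl @: S :&: inr @: [set: 'I_l] = set0.
  by apply/setP=> z; rewrite !inE; apply/negP=> /andP[/imsetP[? _ ->] /imsetP[]].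
rewrite cards0 subn0 !card_imset; try by move=> ? ? [].
by rewrite cardsT card_ord => <-; rewrite addnK.
Qed.

Lemma iso_invariant_eq_in Q (V : finType) (e1 e2 : rel V) (X : {set V}) :
  iso_invariant Q -> {in X &, e1 =2 e2} -> Q V e1 X = Q V e2 X.
Proof. by move=> QI e12; rewrite (QI _ _ e1 e2 id X) ?imset_id // => ? ? _ _. Qed.

Lemma nsets_bij (V W : finType) (e1 : rel V) (e2 : rel W) (f : V -> W) Q :
  iso_invariant Q -> bijective f -> (forall x y, e1 x y = e2 (f x) (f y)) ->
  nsets e1 Q = nsets e2 Q.
Proof.
move=> QI fB fE; have fI := bij_inj fB; have [g fK gK] := fB.
have Qf X : Q V e1 X = Q W e2 (f @: X) by apply: QI => // x y _ _; apply: fI.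
rewrite /nsets -(card_imset _ (imset_inj fI)); apply: eq_card => Y; rewrite inE.
apply/imsetP/idP=> [[X] | QY]; first by rewrite inE Qf => QX ->.
exists (g @: Y); last by rewrite -imset_comp (eq_imset _ gK) imset_id.
by rewrite inE Qf -imset_comp (eq_imset _ gK) imset_id.
Qed.

Lemma card_window (V W : finType) (G : rel V) (H : rel W) Q l
    (b : 'I_l -> V) (e : W -> V) (P : pred {set V}) :
  iso_invariant Q -> injective b -> injective e ->
  (forall s s', path_rel l s s' = G (b s) (b s')) ->
  (forall w w', H w w' = G (e w) (e w')) ->
  (forall s w, [&& b s != e w, ~~ G (b s) (e w) & ~~ G (e w) (b s)]) ->
  (forall X, P X = (b @: setT \subset X) && (X \subset b @: setT :|: e @: setT) && Q V G X) ->
  #|[set X | P X]| = nsets H (with_path Q l).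
Proof.
move=> QI bI eI bE eE cross PE.
pose F (Y : {set W}) := b @: setT :|: e @: Y.
have QF Y : with_path Q l H Y = Q V G (F Y).
  pose phi (z : W + 'I_l) := match z with inl w => e w | inr s => b s end.
  rewrite /with_path (QI _ _ _ G phi).
  - by congr Q; rewrite /F imsetU setUC -!imset_comp; congr (_ :|: _); apply: eq_imset.
  - move=> [w|s] [w'|s'] _ _ /= => [/eI->|ebE|beE|/bI->] //.
    + by move: (cross s' w); rewrite ebE eqxx.
    + by move: (cross s w'); rewrite beE eqxx.
  - move=> [w|s] [w'|s'] _ _ /=; [exact: eE | | | exact: bE].
    + by case/and3P: (cross s' w) => _ _ /negbTE->.
    + by case/and3P: (cross s w') => _ /negbTE->.
have memF Y w : (e w \in F Y) = (w \in Y).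
  rewrite in_setU mem_imset //; case: imsetP => // -[s _ ebs].
  by move: (cross s w); rewrite ebs eqxx.
have FI : injective F by move=> Y1 Y2 FY; apply/setP=> w; rewrite -!memF FY.
rewrite /nsets -(card_imset _ FI); apply: eq_card => X; rewrite inE PE.
apply/idP/imsetP=> [/andP[/andP[bX Xbe] QX] | [Y]].
- have XF : X = F (e @^-1: X).
    apply/setP=> v; rewrite in_setU; apply/idP/orP=> [vX | [/(subsetP bX) // | /imsetP[w]]].
      case/setUP: (subsetP Xbe v vX) => [|/imsetP[w _ vE]]; first by left.
      by right; rewrite vE imset_f // inE -vE.
    by rewrite inE => ? ->.
  by exists (e @^-1: X); rewrite // inE QF -XF.
- rewrite inE QF => QY ->; rewrite QY andbT subsetUl /=.
  by rewrite /F setUS // imsetS ?subsetT.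
Qed.

Lemma card_full_run (V : finType) (G : rel V) Q k (b : 'I_k -> V) (B : {set V})
    (P : pred {set V}) :
  iso_invariant Q -> sized Q k -> injective b ->
  (forall s s', path_rel k s s' = G (b s) (b s')) -> b @: setT \subset B ->
  (forall X, P X = (b @: setT \subset X) && (X \subset B) && Q V G X) ->
  #|[set X | P X]| = Q _ (path_rel k) setT.
Proof.
move=> QI QS bI bE bB PE.
have Qb : Q V G (b @: setT) = Q _ (path_rel k) setT.
  by rewrite (QI _ _ _ G b) // => s s' _ _; apply: bI.
have -> : [set X | P X] = [set X | (X == b @: setT) && Q V G X].
  apply/setP=> X; rewrite !inE PE.
  apply/andP/andP=> [[/andP[bX _] QX] | [/eqP-> ->]]; split=> //.
    by rewrite eq_sym eqEcard bX (QS _ _ _ QX) card_imset // cardsT card_ord leqnn.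
  by rewrite subxx bB.
rewrite -Qb; case: (boolP (Q V G (b @: setT))) => Qb0.
  rewrite -[RHS]/1 -(cards1 (b @: setT)); apply: eq_card => X.
  by rewrite !inE; case: eqP => // ->.
by apply: eq_card0 => X; rewrite !inE; case: eqP => // ->; apply/negbTE.
Qed.

(** * Graphs on ordinals given by relations on labels *)

Definition adjn : rel nat := fun i j => (i.+1 == j) || (j.+1 == i).

Definition ord_rel n (g : rel nat) : rel 'I_n := fun i j => g i j.
Arguments ord_rel : clear implicits.

Definition img n M (f : nat -> nat) : {set 'I_n} :=
  [set v : 'I_n | [exists s : 'I_M, f s == v]].
Arguments img : clear implicits.

Definition nat_embedding M n (f : nat -> nat) (h g : rel nat) : Prop :=
  [/\ forall i, i < M -> f i < n,
      forall i j, i < M -> j < M -> f i = f j -> i = j &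
      forall i j, i < M -> j < M -> h i j = g (f i) (f j)].

Lemma ord_embedding M n f h g : nat_embedding M n f h g ->
  exists F : 'I_M -> 'I_n, [/\ forall i, val (F i) = f i, injective F,
    forall i j, ord_rel M h i j = ord_rel n g (F i) (F j) & F @: setT = img n M f].
Proof.
case=> fn fI fE; exists (fun i : 'I_M => Ordinal (fn i (ltn_ord i))); split=> //.
- by move=> i j /(congr1 val) /fI ij; apply: val_inj; apply: ij.
- by move=> i j; apply: fE.
apply/setP=> v; rewrite inE; apply/imsetP/existsP=> [[i _ ->] | [i /eqP fiv]].
  by exists i.
by exists i => //; apply: val_inj.
Qed.

Lemma card_window_nat n l N (g h : rel nat) Q (run rest : nat -> nat)
    (P : pred {set 'I_n}) :
  iso_invariant Q -> nat_embedding l n run adjn g -> nat_embedding N n rest h g ->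
  (forall s i, s < l -> i < N ->
     [&& run s != rest i, ~~ g (run s) (rest i) & ~~ g (rest i) (run s)]) ->
  (forall X, P X = (img n l run \subset X) && (X \subset img n l run :|: img n N rest)
                   && Q _ (ord_rel n g) X) ->
  #|[set X | P X]| = nsets (ord_rel N h) (with_path Q l).
Proof.
move=> QI /ord_embedding[b [bv bI bE <-]] /ord_embedding[e [ev eI eE <-]] cross PE.
apply: (card_window QI bI eI bE eE _ PE) => s w.
by have := cross s w (ltn_ord s) (ltn_ord w); rewrite -bv -ev.
Qed.

Lemma card_full_run_nat n k (g : rel nat) Q (run : nat -> nat) (B : {set 'I_n})
    (P : pred {set 'I_n}) :
  iso_invariant Q -> sized Q k -> nat_embedding k n run adjn g -> img n k run \subset B ->
  (forall X, P X = (img n k run \subset X) && (X \subset B) && Q _ (ord_rel n g) X) ->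
  #|[set X | P X]| = Q _ (path_rel k) setT.
Proof.
move=> QI QS /ord_embedding[b [_ bI bE <-]] bB PE.
exact: (card_full_run QI QS bI bE bB PE).
Qed.

(** * Counting sets by the length of a run *)

Definition occupied n (X : {set 'I_n}) (i : nat) : bool := [exists v in X, val v == i].

Definition run_ge n (X : {set 'I_n}) (ray : nat -> nat) (m : nat) : bool :=
  all (fun t => occupied X (ray t)) (iota 0 m).

Definition run_eq n (X : {set 'I_n}) (ray : nat -> nat) (m : nat) : bool :=
  run_ge X ray m && ~~ occupied X (ray m).

Lemma card_run_split n (P : pred {set 'I_n}) ray K :
  #|[set X | P X]| = \sum_(m < K) #|[set X | P X && run_eq X ray m]|
                     + #|[set X | P X && run_ge X ray K]|.
Proof.
elim: K => [|K IH].
  by rewrite big_ord0; apply: eq_card => X; rewrite !inE andbT.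
rewrite IH big_ord_recr /= -addnA; congr (_ + _).
rewrite -(cardsID [set X | occupied X (ray K)]) addnC; congr (_ + _); apply: eq_card => X.
  by rewrite !inE /run_eq; case: (P X); case: (run_ge _ _ _); case: (occupied _ _).
by rewrite !inE /run_ge -addn1 iotaD all_cat /= andbT add0n andbA.
Qed.

Lemma run_geE n (X : {set 'I_n}) ray m :
  (forall t, t < m -> ray t < n) -> run_ge X ray m = (img n m ray \subset X).
Proof.
move=> ray_lt; apply/allP/subsetP=> [Xray v | imgX t].
  rewrite inE => /existsP[t /eqP tv].
  have tm : val t \in iota 0 m by rewrite mem_iota leq0n add0n ltn_ord.
  case/existsP: (Xray _ tm) => u /andP[uX /eqP uE].
  by rewrite (_ : v = u) //; apply: val_inj => /=; rewrite -tv uE.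
rewrite mem_iota => /andP[_ ltm]; apply/existsP; exists (Ordinal (ray_lt t ltm)).
by rewrite eqxx andbT imgX // inE; apply/existsP; exists (Ordinal ltm).
Qed.

Lemma negb_occupiedE n (X : {set 'I_n}) i :
  ~~ occupied X i = (X \subset [set v : 'I_n | val v != i]).
Proof.
rewrite negb_exists; apply/forallP/subsetP=> [h v vX | h v].
  by rewrite inE; move: (h v); rewrite vX.
by apply/negP=> /andP[/h]; rewrite inE => /negbTE->.
Qed.

Lemma run_eq2_window n (X : {set 'I_n}) L R m j (Run Rest : {set 'I_n}) :
  (forall t, t < m -> L t < n) -> (forall t, t < j -> R t < n) ->
  Run = img n m L :|: img n j R ->
  Run :|: Rest = [set v : 'I_n | (val v != L m) && (val v != R j)] ->
  run_eq X L m && run_eq X R j = (Run \subset X) && (X \subset Run :|: Rest).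
Proof.
move=> Ln Rn -> ->; rewrite /run_eq !run_geE // subUset !negb_occupiedE.
have -> : [set v : 'I_n | (val v != L m) && (val v != R j)]
          = [set v : 'I_n | val v != L m] :&: [set v : 'I_n | val v != R j].
  by apply/setP=> v; rewrite !inE.
by rewrite subsetI; case: (_ \subset X); case: (_ \subset X); case: (X \subset _).
Qed.

Lemma card_run_ge_full n k (g : rel nat) Q ray :
  iso_invariant Q -> sized Q k -> nat_embedding k n ray adjn g ->
  #|[set X | Q _ (ord_rel n g) X && run_ge X ray k]| = Q _ (path_rel k) setT.
Proof.
move=> QI QS emb; have [ray_lt _ _] := emb.
apply: (card_full_run_nat (g := g) (run := ray) (B := setT) QI QS emb) => // X.
by rewrite subsetT andbT andbC run_geE.
Qed.

Lemma card_run_eq_ge_full n k m (g : rel nat) Q L R run :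
  iso_invariant Q -> sized Q k -> nat_embedding k n run adjn g ->
  (forall t, t < m -> L t < n) -> (forall t, t < k - m -> R t < n) ->
  img n k run = img n m L :|: img n (k - m) R ->
  img n k run \subset [set v : 'I_n | val v != L m] ->
  #|[set X | Q _ (ord_rel n g) X && run_eq X L m && run_ge X R (k - m)]|
  = Q _ (path_rel k) setT.
Proof.
move=> QI QS emb Ln Rn runE runB.
apply: (card_full_run_nat QI QS emb runB) => X.
rewrite /run_eq !run_geE // negb_occupiedE runE subUset.
by case: (Q _ _ X); case: (_ \subset X); case: (_ \subset X); case: (X \subset _).
Qed.

Lemma eq_card_avoid n (g1 g2 : rel nat) Q b : iso_invariant Q ->
  (forall i j, i != b -> j != b -> g1 i j = g2 i j) ->
  #|[set X | Q _ (ord_rel n g1) X && ~~ occupied X b]|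
  = #|[set X | Q _ (ord_rel n g2) X && ~~ occupied X b]|.
Proof.
move=> QI g12; apply: eq_card => X; rewrite !inE negb_occupiedE.
case: (boolP (X \subset _)) => [/subsetP Xb | _]; last by rewrite !andbF.
congr (_ && _); apply: iso_invariant_eq_in => // u v /Xb + /Xb.
by rewrite !inE; apply: g12.
Qed.

Definition splice a c0 c1 (i : nat) : nat := if i < a then c0 + i else c1 + (i - a).

Lemma mem_img_splice n M a c0 c1 (v : 'I_n) : a <= M ->
  (v \in img n M (splice a c0 c1)) = (c0 <= v < c0 + a) || (c1 <= v < c1 + (M - a)).
Proof.
rewrite inE /splice => aM; apply/existsP/idP=> [[s] | /orP[] /andP[lo hi]].
- by have := ltn_ord s; case: ifP => sa ltsM /eqP <-; lia.
- have lt : v - c0 < M by lia.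
  by exists (Ordinal lt); rewrite /=; case: ifP => va; lia.
- have lt : v - c1 + a < M by lia.
  by exists (Ordinal lt); rewrite /=; case: ifP => va; lia.
Qed.

Lemma mem_img_add n M c (v : 'I_n) : (v \in img n M (addn c)) = (c <= v < c + M).
Proof.
rewrite inE; apply/existsP/idP=> [[s /eqP <-] | /andP[lo hi]].
  by have := ltn_ord s; lia.
have lt : v - c < M by lia.
by exists (Ordinal lt); rewrite /=; lia.
Qed.

Lemma mem_img_sub n M c (v : 'I_n) : M <= c.+1 ->
  (v \in img n M (subn c)) = (c.+1 - M <= v <= c).
Proof.
rewrite inE => Mc; apply/existsP/idP=> [[s /eqP <-] | /andP[lo hi]].
  by have := ltn_ord s; lia.
have lt : c - v < M by lia.
by exists (Ordinal lt); rewrite /=; lia.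
Qed.

(* On [0, n): P_n without the edge {x-1, x}, i.e. P_x + P_(n-x). *)
Definition cut_adj x : rel nat := fun i j => adjn i j && (maxn i j != x).

Notation cut_path n x := (ord_rel n (cut_adj x)).

(* On [0, n): C_q on [0, q), closed by the edge {0, q-1}, plus P_(n-q) on [q, n); the test
   [i != j] rules out a loop when q = 1. *)
Definition cycle_adj q : rel nat :=
  fun i j => (i != j) && (cut_adj q i j || (minn i j == 0) && (maxn i j == q.-1)).

Notation cycle_plus_path q n := (ord_rel n (cycle_adj q)).

Ltac splice_lia :=
  rewrite /splice /cycle_adj /cut_adj /adjn /=; repeat (case: ifP => ? || move=> ?); lia.

Ltac set_lia := apply/setP => -[v lt_v];
  rewrite ?in_setU ?mem_img_splice ?mem_img_add ?mem_img_sub ?inE /=; lia.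

(** * Moving the cut of P_x + P_(n-x) *)

Lemma window_cut_path_up Q n x m : iso_invariant Q -> x + m < n ->
  #|[set X | Q _ (cut_path n x) X && run_eq X (addn x) m]|
  = nsets (cut_path (n - m - 1) x) (with_path Q m).
Proof.
move=> QI lt.
apply: (card_window_nat (g := cut_adj x) (run := addn x)
                        (rest := splice x 0 (x + m + 1))) => //.
- by split; splice_lia.
- by split; splice_lia.
- by splice_lia.
move=> X; rewrite andbC; congr (_ && _); rewrite -[LHS]andbb.
by apply: run_eq2_window; try set_lia; move=> *; lia.
Qed.

Lemma window_cut_path_down Q n x m : iso_invariant Q -> m <= x -> x < n ->
  #|[set X | Q _ (cut_path n x.+1) X && run_eq X (subn x) m]|
  = nsets (cut_path (n - m - 1) (x - m)) (with_path Q m).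
Proof.
move=> QI le lt.
apply: (card_window_nat (g := cut_adj x.+1) (run := subn x)
                        (rest := splice (x - m) 0 (x + 1))) => //.
- by split; splice_lia.
- by split; splice_lia.
- by splice_lia.
move=> X; rewrite andbC; congr (_ && _); rewrite -[LHS]andbb.
by apply: run_eq2_window; try set_lia; move=> *; lia.
Qed.

Lemma eq_on_range (f : nat -> nat) lo hi :
  (forall x, lo <= x < hi -> f x = f x.+1) ->
  forall x y, lo <= x <= hi -> lo <= y <= hi -> f x = f y.
Proof.
move=> step; suff toLo x : lo <= x <= hi -> f x = f lo by move=> x y /toLo-> /toLo->.
elim: x => [|x IH] rng; first by rewrite (_ : lo = 0) //; lia.
have [<- // | ne] := eqVneq lo x.+1.
by rewrite -step ?IH //; lia.
Qed.

Lemma nsets_cut_path k Q N x y : iso_invariant Q -> sized Q k ->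
  k <= x.+1 -> k <= y.+1 -> x + k <= N.+1 -> y + k <= N.+1 ->
  nsets (cut_path N x) Q = nsets (cut_path N y) Q.
Proof.
elim/ltn_ind: k Q N x y => k IH Q N x y QI QS *.
apply: (eq_on_range (f := fun z => nsets (cut_path N z) Q) (lo := k.-1) (hi := N.+1 - k));
  try lia.
move=> z /andP[kz zN]; rewrite /nsets [LHS](card_run_split _ (addn z) k).
rewrite [RHS](card_run_split _ (subn z) k).
congr (_ + _); last by rewrite !card_run_ge_full //; split; splice_lia.
apply: eq_bigr => -[[|m] ltmk] _ /=.
  by rewrite /run_eq /= addn0 subn0; apply: eq_card_avoid => // *; splice_lia.
rewrite window_cut_path_up ?window_cut_path_down //; try lia.
apply: (IH (k - m.+1)); try lia; [exact: with_path_invariant | exact: with_path_sized].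
Qed.

(** * The path versus the cycle plus a path *)

Lemma window_path_edge Q q r m j : iso_invariant Q -> m < q -> j < r ->
  #|[set X | Q _ (path_rel (q + r)) X && run_eq X (subn q.-1) m && run_eq X (addn q) j]|
  = nsets (cut_path (q + r - m - j - 2) (q - m - 1)) (with_path Q (m + j)).
Proof.
move=> QI mq jr.
apply: (card_window_nat (g := adjn) (run := splice (m + j) (q - m) 0)
                        (rest := splice (q - m - 1) 0 (q + j + 1))) => //.
- by split; splice_lia.
- by split; splice_lia.
- by splice_lia.
move=> X; rewrite -andbA andbC; congr (_ && _).
by apply: run_eq2_window; try set_lia; move=> *; lia.
Qed.

(* Stated with q = a + m + j + 2 rather than with truncated subtractions, which make the
   arithmetic side goals very slow for [lia]. *)
Lemma window_cycle_path_edge Q q r m j a : iso_invariant Q -> q = a + m + j + 2 ->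
  #|[set X | Q _ (cycle_plus_path q (q + r)) X && run_eq X (subn q.-1) m
             && run_eq X (addn 0) j]|
  = nsets (cut_path (a + r) a) (with_path Q (m + j)).
Proof.
move=> QI ->.
apply: (card_window_nat (g := cycle_adj (a + m + j + 2)) (run := splice m (a + j + 2) 0)
                        (rest := splice a (j + 1) (a + m + j + 2))) => //.
- by split; splice_lia.
- by split; splice_lia.
- by splice_lia.
move=> X; rewrite -andbA andbC; congr (_ && _).
by apply: run_eq2_window; try set_lia; move=> *; lia.
Qed.

Lemma full_path_edge Q q r m k :
  iso_invariant Q -> sized Q k -> m < q -> m <= k -> k <= r + m ->
  #|[set X | Q _ (path_rel (q + r)) X && run_eq X (subn q.-1) m
             && run_ge X (addn q) (k - m)]|
  = Q _ (path_rel k) setT.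
Proof.
move=> QI QS *; apply: (card_run_eq_ge_full (g := adjn) (run := addn (q - m)) QI QS).
- by split; splice_lia.
- by move=> *; lia.
- by move=> *; lia.
- by set_lia.
by apply/subsetP => -[v lt_v]; rewrite mem_img_add inE /=; lia.
Qed.

Lemma full_cycle_path_edge Q q r m k : iso_invariant Q -> sized Q k -> m <= k -> k < q ->
  #|[set X | Q _ (cycle_plus_path q (q + r)) X && run_eq X (subn q.-1) m
             && run_ge X (addn 0) (k - m)]|
  = Q _ (path_rel k) setT.
Proof.
move=> QI QS *.
apply: (card_run_eq_ge_full (g := cycle_adj q) (run := splice m (q - m) 0) QI QS).
- by split; splice_lia.
- by move=> *; lia.
- by move=> *; lia.
- by set_lia.
by apply/subsetP => -[v lt_v]; rewrite mem_img_splice ?inE /=; lia.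
Qed.

Lemma nsets_path_cycle_plus_path k Q q r :
  iso_invariant Q -> sized Q k -> k < q -> k <= r.+1 ->
  nsets (path_rel (q + r)) Q = nsets (cycle_plus_path q (q + r)) Q.
Proof.
move=> QI QS kq kr; rewrite /nsets [LHS](card_run_split _ (subn q.-1) k).
rewrite [RHS](card_run_split _ (subn q.-1) k).
congr (_ + _); last first.
  by rewrite (card_run_ge_full (g := adjn)) ?card_run_ge_full //; split; splice_lia.
apply: eq_bigr => -[[|m] ltmk] _ /=.
  by rewrite /run_eq /= subn0; apply: (@eq_card_avoid _ adjn) => // *; splice_lia.
rewrite [LHS](card_run_split _ (addn q) (k - m.+1)).
rewrite [RHS](card_run_split _ (addn 0) (k - m.+1)).
congr (_ + _); last by rewrite full_path_edge ?full_cycle_path_edge //; lia.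
apply: eq_bigr => -[j ltj] _ /=.
rewrite window_path_edge ?(@window_cycle_path_edge Q q r m.+1 j (q - m.+1 - j - 2)) //; try lia.
rewrite (_ : q + r - m.+1 - j - 2 = q - m.+1 - j - 2 + r); last lia.
apply: (nsets_cut_path (k := k - (m.+1 + j))); try lia.
  exact: with_path_invariant.
exact: with_path_sized.
Qed.

Lemma cycle_rel_unsplit q r x y : 0 < q ->
  sum_rel (cycle_rel q) (path_rel r) x y = cycle_plus_path q (q + r) (unsplit x) (unsplit y).
Proof.
move=> q0; have modS i : i < q -> i.+1 %% q = if i.+1 == q then 0 else i.+1.
  by move=> ltiq; case: eqP => [->|ne]; rewrite ?modnn // modn_small //; lia.
case: x => -[i lt_i]; case: y => -[j lt_j];
  rewrite /= /cycle_rel /path_rel /ord_rel -?(inj_eq (@ord_inj q)) /= ?modS //; splice_lia.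
Qed.

Theorem lemma3p1 (T : finType) (eL : rel T) (k q r : nat) :
  linear_forest eL -> #|T| = k ->
  k + 1 <= q -> k <= r + 1 ->
  s_count (path_rel (q + r)) eL =
  s_count (sum_rel (cycle_rel q) (path_rel r)) eL.
Proof.
(* L need not be a linear forest: the identity holds for every graph L on k vertices. *)
move=> _ card_T kq kr.
have QI := copy_of_invariant eL; have QS := @copy_of_sized _ eL; rewrite card_T in QS.
change (nsets (path_rel (q + r)) (copy_of eL)
        = nsets (sum_rel (cycle_rel q) (path_rel r)) (copy_of eL)).
rewrite (nsets_path_cycle_plus_path QI QS); try lia.
symmetry; apply: (nsets_bij QI (f := @unsplit q r)).
  by exists (@split q r); [exact: unsplitK | exact: splitK].
by move=> x y; apply: cycle_rel_unsplit; lia.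
Qed.
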